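(* Let $F:\mathcal{A}\to \mathcal{B}$ be a fully faithful (additive) covariant functor between abelian categories, and let $M$ and $N$ be objects of $\mathcal{A}$. (1) Assume that $F$ is left exact. Then $N$ is strongly $M$-Rickart in $\mathcal{A}$ if and only if $F(N)$ is strongly $F(M)$-Rickart in $\mathcal{B}$. (2) Assume that $F$ is right exact. Then $N$ is dual strongly $M$-Rickart in $\mathcal{A}$ if and only if $F(N)$ is dual strongly $F(M)$-Rickart in $\mathcal{B}$.
   Context: A morphism $f:X\to Y$ is a section if $f'f=1_X$ for some $f'$, a retraction if $ff'=1_Y$ for some $f'$. A monomorphism $k:K\to X$ is fully invariant if for every $h:X\to X$ there is $\alpha:K\to K$ with $hk=k\alpha$; an epimorphism $c:X\to C$ is fully coinvariant if for every $h:X\to X$ there is $\gamma:C\to C$ with $ch=\gamma c$. For objects $M,N$: $N$ is strongly $M$-Rickart if the kernel of every morphism $f:M\to N$ is a fully invariant section; $N$ is dual strongly $M$-Rickart if the cokernel of every morphism $f:M\to N$ is a fully coinvariant retraction. *)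

From HB Require Import structures.
From mathcomp Require Import all_boot all_algebra.
Set Implicit Arguments. Unset Strict Implicit. Unset Printing Implicit Defensive.
Import GRing.Theory.
Local Open Scope ring_scope.

Record cat_data := CatData {
  Ob : Type;
  Hom : Ob -> Ob -> zmodType;
  comp : forall X Y Z : Ob, Hom Y Z -> Hom X Y -> Hom X Z;
  idm : forall X : Ob, Hom X X }.
Arguments comp {c X Y Z}.
Arguments idm {c}.

Section CatDefs.
Variable C : cat_data.
Local Notation "g ∘ f" := (comp g f) (at level 40, left associativity).

Definition is_preadditive : Prop :=
  [/\ (forall (W X Y Z : Ob C) (h : Hom Y Z) (g : Hom X Y) (f : Hom W X),
         h ∘ (g ∘ f) = (h ∘ g) ∘ f),
      (forall (X Y : Ob C) (f : Hom X Y), idm Y ∘ f = f),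
      (forall (X Y : Ob C) (f : Hom X Y), f ∘ idm X = f),
      (forall (X Y Z : Ob C) (g1 g2 : Hom Y Z) (f : Hom X Y),
         (g1 + g2) ∘ f = g1 ∘ f + g2 ∘ f) &
      (forall (X Y Z : Ob C) (g : Hom Y Z) (f1 f2 : Hom X Y),
         g ∘ (f1 + f2) = g ∘ f1 + g ∘ f2)].

Definition is_mono (X Y : Ob C) (f : Hom X Y) : Prop :=
  forall (W : Ob C) (g h : Hom W X), f ∘ g = f ∘ h -> g = h.
Definition is_epi (X Y : Ob C) (f : Hom X Y) : Prop :=
  forall (W : Ob C) (g h : Hom Y W), g ∘ f = h ∘ f -> g = h.

Definition is_kernel (X Y K : Ob C) (f : Hom X Y) (k : Hom K X) : Prop :=
  f ∘ k = 0 /\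
  forall (W : Ob C) (g : Hom W X), f ∘ g = 0 ->
    exists u : Hom W K, k ∘ u = g /\ forall v : Hom W K, k ∘ v = g -> v = u.

Definition is_cokernel (X Y Q : Ob C) (f : Hom X Y) (c : Hom Y Q) : Prop :=
  c ∘ f = 0 /\
  forall (W : Ob C) (g : Hom Y W), g ∘ f = 0 ->
    exists u : Hom Q W, u ∘ c = g /\ forall v : Hom Q W, v ∘ c = g -> v = u.

Definition is_abelian : Prop :=
  [/\ is_preadditive,
      (* zero object *)
      (exists Z : Ob C, idm Z = 0) /\
      (forall X1 X2 : Ob C, exists (P : Ob C) (i1 : Hom X1 P) (i2 : Hom X2 P)
           (p1 : Hom P X1) (p2 : Hom P X2),
           [/\ p1 ∘ i1 = idm X1, p2 ∘ i2 = idm X2, p1 ∘ i2 = 0, p2 ∘ i1 = 0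
             & i1 ∘ p1 + i2 ∘ p2 = idm P]) /\
      (forall (X Y : Ob C) (f : Hom X Y), exists (K : Ob C) (k : Hom K X), is_kernel f k),
      (forall (X Y : Ob C) (f : Hom X Y), exists (Q : Ob C) (c : Hom Y Q), is_cokernel f c),
      (forall (K X : Ob C) (m : Hom K X), is_mono m ->
         exists (Y : Ob C) (f : Hom X Y), is_kernel f m) &
      (forall (Y Q : Ob C) (e : Hom Y Q), is_epi e ->
         exists (X : Ob C) (f : Hom X Y), is_cokernel f e)].

Definition is_section (X Y : Ob C) (f : Hom X Y) : Prop :=
  exists f' : Hom Y X, f' ∘ f = idm X.
Definition is_retraction (X Y : Ob C) (f : Hom X Y) : Prop :=
  exists f' : Hom Y X, f ∘ f' = idm Y.

(* k assumed to be a monomorphism in the paper; here it is a kernel *)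
Definition fully_invariant (K X : Ob C) (k : Hom K X) : Prop :=
  forall h : Hom X X, exists alpha : Hom K K, h ∘ k = k ∘ alpha.
Definition fully_coinvariant (X Q : Ob C) (c : Hom X Q) : Prop :=
  forall h : Hom X X, exists gamma : Hom Q Q, c ∘ h = gamma ∘ c.

(* N is strongly M-Rickart: the kernel of every f : M -> N is a fully
   invariant section (kernels are unique up to iso; we quantify over all) *)
Definition strongly_rickart (M N : Ob C) : Prop :=
  forall (f : Hom M N) (K : Ob C) (k : Hom K M),
    is_kernel f k -> is_section k /\ fully_invariant k.

Definition dual_strongly_rickart (M N : Ob C) : Prop :=
  forall (f : Hom M N) (Q : Ob C) (c : Hom N Q),
    is_cokernel f c -> is_retraction c /\ fully_coinvariant c.

End CatDefs.

Record abcat := AbCat { acat :> cat_data; acat_ax : is_abelian acat }.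

Record functor_data (A B : cat_data) := FunctorData {
  Fob : Ob A -> Ob B;
  Fhom : forall X Y : Ob A, Hom X Y -> Hom (Fob X) (Fob Y) }.
Arguments Fhom {A B} f {X Y}.

Section FunctorDefs.
Variables (A B : cat_data) (F : functor_data A B).

Definition is_covariant_functor : Prop :=
  (forall (X Y Z : Ob A) (g : Hom Y Z) (f : Hom X Y),
      Fhom F (comp g f) = comp (Fhom F g) (Fhom F f)) /\
  (forall X : Ob A, Fhom F (idm X) = idm (Fob F X)).

Definition is_additive : Prop :=
  forall (X Y : Ob A) (f g : Hom X Y), Fhom F (f + g) = Fhom F f + Fhom F g.

Definition fully_faithful : Prop :=
  forall X Y : Ob A, bijective (@Fhom A B F X Y).

Definition left_exact : Prop :=
  forall (X Y K : Ob A) (f : Hom X Y) (k : Hom K X),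
    is_kernel f k -> is_kernel (Fhom F f) (Fhom F k).
Definition right_exact : Prop :=
  forall (X Y Q : Ob A) (f : Hom X Y) (c : Hom Y Q),
    is_cokernel f c -> is_cokernel (Fhom F f) (Fhom F c).
End FunctorDefs.

(** A fully faithful functor both preserves and reflects sections and fully
    invariant morphisms: each property asserts the existence of morphisms
    satisfying an equation between composites, and every morphism between
    images of [F] is the image of a unique morphism.  A left exact [F] sends
    a kernel [k] of [f] to a kernel [F k] of [F f]; since [F] is full, every
    morphism [F M -> F N] is of the form [F f], and any two kernels of the
    same morphism differ by an isomorphism, which preserves both properties.
    Part (2) is part (1) for the opposite categories, in which cokernels,
    retractions and fully coinvariant epimorphisms become kernels, sections
    and fully invariant monomorphisms. *)
From Pilot Require Import Defs.
From mathcomp Require Import all_boot all_algebra.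
Import Defs.

Set Implicit Arguments.
Unset Strict Implicit.
Unset Printing Implicit Defensive.

Local Notation "g ∘ f" := (comp g f) (at level 40, left associativity).

Definition has_kernels (C : cat_data) : Prop :=
  forall (X Y : Ob C) (f : Hom X Y), exists (K : Ob C) (k : Hom K X), is_kernel f k.

Definition has_cokernels (C : cat_data) : Prop :=
  forall (X Y : Ob C) (f : Hom X Y), exists (Q : Ob C) (c : Hom Y Q), is_cokernel f c.

Section Preadditive.
Variables (C : cat_data) (HC : is_preadditive C).

Lemma compA (W X Y Z : Ob C) (h : Hom Y Z) (g : Hom X Y) (f : Hom W X) :
  h ∘ (g ∘ f) = h ∘ g ∘ f.
Proof. by case: HC. Qed.

Lemma comp_idr (X Y : Ob C) (f : Hom X Y) : f ∘ idm X = f.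
Proof. by case: HC. Qed.

Lemma kernel_iso (X Y K1 K2 : Ob C) (f : Hom X Y) (k1 : Hom K1 X) (k2 : Hom K2 X) :
  is_kernel f k1 -> is_kernel f k2 ->
  exists (u : Hom K1 K2) (v : Hom K2 K1),
    [/\ k2 ∘ u = k1, k1 ∘ v = k2 & u ∘ v = idm K2].
Proof.
move=> [fk1 univ1] [fk2 univ2].
have [u [k2u _]] := univ2 _ _ fk1.
have [v [k1v _]] := univ1 _ _ fk2.
have [w [_ w_uniq]] := univ2 _ _ fk2.
exists u, v; split=> //.
rewrite (w_uniq _ (comp_idr k2)); apply: w_uniq.
by rewrite compA k2u.
Qed.

Lemma is_section_kernel (X Y K1 K2 : Ob C) (f : Hom X Y)
    (k1 : Hom K1 X) (k2 : Hom K2 X) :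
  is_kernel f k1 -> is_kernel f k2 -> is_section k1 -> is_section k2.
Proof.
move=> ker1 ker2 [r rk1].
have [u [v [_ <- uv]]] := kernel_iso ker1 ker2.
by exists (u ∘ r); rewrite -compA (compA r) rk1 (compA u) comp_idr.
Qed.

Lemma fully_invariant_kernel (X Y K1 K2 : Ob C) (f : Hom X Y)
    (k1 : Hom K1 X) (k2 : Hom K2 X) :
  is_kernel f k1 -> is_kernel f k2 -> fully_invariant k1 -> fully_invariant k2.
Proof.
move=> ker1 ker2 inv1 h.
have [u [v [k2u k1v _]]] := kernel_iso ker1 ker2.
have [a ha] := inv1 h.
by exists (u ∘ a ∘ v); rewrite -{1}k1v compA ha -k2u !compA.
Qed.

End Preadditive.

Section FullyFaithful.
Variables (A B : cat_data) (F : functor_data A B).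
Hypotheses (HF : is_covariant_functor F) (Hff : fully_faithful F).

Lemma Fhom_comp (X Y Z : Ob A) (g : Hom Y Z) (f : Hom X Y) :
  Fhom F (g ∘ f) = Fhom F g ∘ Fhom F f.
Proof. by case: HF. Qed.

Lemma Fhom_idm (X : Ob A) : Fhom F (idm X) = idm (Fob F X).
Proof. by case: HF. Qed.

Lemma Fhom_surj (X Y : Ob A) (g : Hom (Fob F X) (Fob F Y)) :
  exists f : Hom X Y, Fhom F f = g.
Proof. by have [G _ GK] := Hff X Y; exists (G g). Qed.

Lemma Fhom_inj (X Y : Ob A) : injective (@Fhom A B F X Y).
Proof. exact: bij_inj (Hff X Y). Qed.

Lemma is_section_Fhom (K X : Ob A) (k : Hom K X) :
  is_section (Fhom F k) <-> is_section k.
Proof.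
split=> [[r] | [r rk]]; last by exists (Fhom F r); rewrite -Fhom_comp rk Fhom_idm.
have [r0 <-] := Fhom_surj r => rk.
by exists r0; apply: Fhom_inj; rewrite Fhom_comp rk Fhom_idm.
Qed.

Lemma fully_invariant_Fhom (K X : Ob A) (k : Hom K X) :
  fully_invariant (Fhom F k) <-> fully_invariant k.
Proof.
split=> inv h.
  have [a] := inv (Fhom F h); have [a0 <-] := Fhom_surj a => ha.
  by exists a0; apply: Fhom_inj; rewrite !Fhom_comp.
have [h0 <-] := Fhom_surj h; have [a ha] := inv h0.
by exists (Fhom F a); rewrite -!Fhom_comp ha.
Qed.

Hypotheses (HB : is_preadditive B) (kerA : has_kernels A) (lexF : left_exact F).

Lemma strongly_rickart_Fob (M N : Ob A) :
  strongly_rickart M N <-> strongly_rickart (Fob F M) (Fob F N).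
Proof.
split=> rickart f K k kerk.
  have [f0 def_f] := Fhom_surj f; subst f.
  have [K0 [k0 kerk0]] := kerA f0.
  have [sec inv] := rickart _ _ _ kerk0.
  have kerFk0 := lexF kerk0.
  split; first exact: is_section_kernel kerFk0 kerk (proj2 (is_section_Fhom k0) sec).
  exact: fully_invariant_kernel kerFk0 kerk (proj2 (fully_invariant_Fhom k0) inv).
by have [/is_section_Fhom ? /fully_invariant_Fhom ?] := rickart _ _ _ (lexF kerk).
Qed.

End FullyFaithful.

Definition opposite (C : cat_data) : cat_data :=
  @CatData (Ob C) (fun X Y => Hom Y X) (fun X Y Z g f => f ∘ g) (@idm C).

Lemma opposite_preadditive (C : cat_data) :
  is_preadditive C -> is_preadditive (opposite C).
Proof. by case=> assoc idl idr distl distr; split=> *; rewrite /= ?assoc. Qed.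

Definition opposite_functor (A B : cat_data) (F : functor_data A B) :
  functor_data (opposite A) (opposite B) :=
  @FunctorData (opposite A) (opposite B) (Fob F) (fun X Y f => Fhom F f).

Lemma opposite_functor_covariant (A B : cat_data) (F : functor_data A B) :
  is_covariant_functor F -> is_covariant_functor (opposite_functor F).
Proof. by case=> Fcomp Fid; split=> *; rewrite /= ?Fcomp ?Fid. Qed.

Lemma has_kernels_opposite (C : cat_data) :
  has_cokernels C -> has_kernels (opposite C).
Proof. by move=> coker X Y; exact: coker. Qed.

Lemma left_exact_opposite_functor (A B : cat_data) (F : functor_data A B) :
  right_exact F -> left_exact (opposite_functor F).
Proof. by move=> rexF X Y K; exact: rexF. Qed.

Lemma fully_faithful_opposite_functor (A B : cat_data) (F : functor_data A B) :
  fully_faithful F -> fully_faithful (opposite_functor F).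
Proof. by move=> Hff X Y; exact: Hff. Qed.

Lemma dual_strongly_rickart_opposite (C : cat_data) (M N : Ob C) :
  dual_strongly_rickart M N = @strongly_rickart (opposite C) N M.
Proof. by []. Qed.

Theorem theorem4p1 (A B : abcat) (F : functor_data A B)
  (HF : is_covariant_functor F) (Hadd : is_additive F) (Hff : fully_faithful F)
  (M N : Ob A) :
  (left_exact F ->
     (strongly_rickart M N <-> strongly_rickart (Fob F M) (Fob F N))) /\
  (right_exact F ->
     (dual_strongly_rickart M N <-> dual_strongly_rickart (Fob F M) (Fob F N))).
Proof.
have [_ [_ [_ kerA]] cokerA _ _] := acat_ax A.
have [HB _ _ _ _] := acat_ax B.
split=> exactF; first exact: strongly_rickart_Fob.
rewrite !dual_strongly_rickart_opposite.
exact: (strongly_rickart_Fob (opposite_functor_covariant HF)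
          (fully_faithful_opposite_functor Hff) (opposite_preadditive HB)
          (has_kernels_opposite cokerA) (left_exact_opposite_functor exactF)).
Qed.
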